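(* For every integer $m\ge2$, \[ L_m:=\int\cdots\int_{W_m}\frac{dx_1\cdots dx_m}{x_1\cdots x_m}=m!\,\zeta(m)-(m-1)\ln^m2-m!\sum_{p=0}^{m-2}\frac{\ln^p2}{p!}\operatorname{Li}_{m-p}\!\left(\tfrac12\right). \]
   Context: $W_m:=\{(x_1,\dots,x_m)\in[0,1]^m : x_i+x_j\ge1 \text{ for all } 1\le i<j\le m\}$. The polylogarithm is $\operatorname{Li}_s(z):=\sum_{r=1}^\infty z^r/r^s$ for $|z|<1$; $\zeta$ is the Riemann zeta function. *)

From Stdlib Require Import Reals Lra Lia List ClassicalEpsilon.
Open Scope R_scope.

(* A point of R^m is represented by a list of reals of length m. *)

Definition InW (m : nat) (xs : list R) : Prop :=
  length xs = m /\
  (forall i, (i < m)%nat -> 0 <= nth i xs 0 <= 1) /\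
  (forall i j, (i < j)%nat -> (j < m)%nat -> 1 <= nth i xs 0 + nth j xs 0).

Definition prodR (xs : list R) : R := fold_right Rmult 1 xs.

Definition trunc_integrand (eps : R) (m : nat) (xs : list R) : R :=
  if excluded_middle_informative
       (InW m xs /\ forall i, (i < m)%nat -> eps <= nth i xs 0)
  then 1 / prodR xs else 0.

(* The first variable of the list is the outermost integration variable. *)
Fixpoint iter_int (n : nat) (F : list R -> R) (v : R) : Prop :=
  match n with
  | O => v = F nil
  | S k => exists g : R -> R,
      (forall t, 0 <= t <= 1 -> iter_int k (fun xs => F (t :: xs)) (g t)) /\
      exists pr : Riemann_integrable g 0 1, RiemannInt pr = v
  end.

(* L_m = l : the (improper) integral of 1/(x_1...x_m) over W_m equals l,
   understood as the limit eps -> 0+ of the (proper, Riemann) integrals over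
   W_m ∩ [eps,1]^m. *)
Definition Lm_is (m : nat) (l : R) : Prop :=
  (forall eps, 0 < eps -> exists v, iter_int m (trunc_integrand eps m) v) /\
  (forall e, 0 < e -> exists d, 0 < d /\
     forall eps v, 0 < eps < d -> iter_int m (trunc_integrand eps m) v ->
       Rabs (v - l) < e).

Definition is_zeta (s : nat) (z : R) : Prop :=
  infinite_sum (fun r => 1 / (INR (S r)) ^ s) z.

Definition is_Li_half (s : nat) (l : R) : Prop :=
  infinite_sum (fun r => (1/2) ^ (S r) / (INR (S r)) ^ s) l.

From Stdlib Require Import Reals Lra Lia List ClassicalEpsilon Factorial.
From Coquelicot Require Import Coquelicot.
Open Scope R_scope.

(* For a > 0 let  W_n(a) = W_n ∩ [a,1]^n  and  I_n(a) = ∫_{W_n(a)} dx / (x_1...x_n).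

   If the first coordinate is t >= a, the other coordinates range over
      W_n(max(a, 1-t)), hence  I_{n+1}(a) = ∫_a^1 I_n(max(a,1-t)) dt/t.
   2. Closed form.  With  φ_k(x) = (-ln max(x,1-x))^k / x  the function
         Wint n a = ln^n 2 + n ∫_a^{1/2} φ_{n-1}
      equals (-ln a)^n for a >= 1/2 and solves the recursion; for a <= 1/2 this is
      checked by differentiating in a (Wint_succ).  By induction on n the iterated
      Riemann integral equals Wint n a (trunc_integral).
   3. Limit.  For 0 < x <= 1/2,  φ_k(x) = Σ_{r<=N} (1-x)^r (-ln(1-x))^k + remainder,
      the remainder integrating to at most 2^k/(N+2).  With P r k an antiderivative of
      y^r (-ln y)^k this gives  ∫_ε^{1/2} φ_k -> Σ_r (P r k 1 - P r k (1/2))  as ε -> 0.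
   4. Series.  P r k 1 = k!/(r+1)^{k+1} and P r k (1/2) is a combination of the terms
      (1/2)^{r+1}/(r+1)^s, so the limit is  k! ζ(k+1) - Σ_p ln^p 2 k!/p! Li_{k+1-p}(1/2),
      with Li_1(1/2) = ln 2 (Mercator series); theorem7 is then a rearrangement. *)

(* auto_derive unfolds INR (S n) into a match; this folds it back. *)
Ltac fold_INR_S :=
  repeat match goal with
  | |- context [match ?n with 0%nat => 1 | S _ => INR ?n + 1 end] =>
      change (match n with 0%nat => 1 | S _ => INR n + 1 end) with (INR (S n))
  end.

Lemma is_derive_eq (f : R -> R) x l l' : is_derive f x l -> l = l' -> is_derive f x l'.
Proof. intros H <-; exact H. Qed.

(* Fundamental theorem of calculus.  Here and below the cast (RInt _ _ _ : R) states the
   equation at type R, so that ring and lra apply to it. *)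
Lemma RInt_FTC (f F : R -> R) a b :
  (forall x, Rmin a b <= x <= Rmax a b -> is_derive F x (f x)) ->
  (forall x, Rmin a b <= x <= Rmax a b -> continuous f x) ->
  (RInt f a b : R) = F b - F a.
Proof. intros HF Hf. apply is_RInt_unique. exact (is_RInt_derive F f a b HF Hf). Qed.

Lemma RInt_const_R (c a b : R) : (RInt (fun _ => c) a b : R) = c * (b - a).
Proof. rewrite RInt_const. apply Rmult_comm. Qed.

Lemma RInt_split (f : R -> R) a b c :
  ex_RInt f a b -> ex_RInt f b c -> (RInt f a c : R) = RInt f a b + RInt f b c.
Proof. intros Hab Hbc. symmetry. exact (RInt_Chasles f a b c Hab Hbc). Qed.

Lemma RInt_inv K u v : 0 < u <= v -> (RInt (fun t => K / t) u v : R) = K * (ln v - ln u).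
Proof.
  intros Huv. rewrite (RInt_FTC _ (fun t => K * ln t)); [ring| |].
  - intros t Ht. rewrite Rmin_left, Rmax_right in Ht by lra.
    auto_derive; [lra|]. field. lra.
  - intros t Ht. rewrite Rmin_left, Rmax_right in Ht by lra.
    apply (ex_derive_continuous (fun t => K / t)). auto_derive. lra.
Qed.

Lemma RInt_ext_continuous (f g : R -> R) u v : u <= v ->
  (forall t, u <= t <= v -> continuous g t) -> (forall t, u < t < v -> f t = g t) ->
  ex_RInt f u v /\ (RInt f u v : R) = RInt g u v.
Proof.
  intros Huv Hg Hfg.
  assert (E : forall t, Rmin u v < t < Rmax u v -> g t = f t).
  { rewrite Rmin_left, Rmax_right by lra. intros; symmetry; auto. }
  split; [|symmetry; apply RInt_ext; exact E].
  apply (ex_RInt_ext g); [exact E|]. apply (ex_RInt_continuous g).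
  rewrite Rmin_left, Rmax_right by lra. exact Hg.
Qed.

Lemma eq_of_same_derive (f g df : R -> R) a b : a <= b ->
  (forall x, a <= x <= b -> is_derive f x (df x) /\ is_derive g x (df x)) ->
  f b = g b -> f a = g a.
Proof.
  intros Hab Hd Hb.
  assert (E : (RInt (fun _ => 0) a b : R) = (f b - g b) - (f a - g a)).
  { apply (RInt_FTC _ (fun x => f x - g x)).
    - intros x Hx. rewrite Rmin_left, Rmax_right in Hx by lra.
      destruct (Hd x Hx) as [Hf Hg].
      replace 0 with (minus (df x) (df x)) by (unfold minus, plus, opp; simpl; ring).
      exact (is_derive_minus _ _ _ _ _ Hf Hg).
    - intros; apply continuous_const. }
  rewrite RInt_const_R in E. lra.
Qed.

Lemma locally_interval (lo hi x : R) : lo < x < hi -> locally x (fun y => lo < y < hi).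
Proof.
  intros Hx. assert (Hd : 0 < Rmin (x - lo) (hi - x)) by (apply Rmin_glb_lt; lra).
  exists (mkposreal _ Hd). intros y Hy. apply Rabs_lt_between' in Hy. simpl in Hy.
  generalize (Rmin_l (x - lo) (hi - x)) (Rmin_r (x - lo) (hi - x)). lra.
Qed.

Lemma ex_RInt_inside (f : R -> R) lo hi u v :
  (forall y, lo < y < hi -> continuous f y) -> lo < u < hi -> lo < v < hi -> ex_RInt f u v.
Proof.
  intros Hf Hu Hv. apply (ex_RInt_continuous f). intros z Hz. apply Hf.
  assert (lo < Rmin u v) by (apply Rmin_glb_lt; lra).
  assert (Rmax u v < hi) by (apply Rmax_lub_lt; lra). lra.
Qed.

Lemma RInt_derive_upper (f : R -> R) lo hi c x :
  (forall y, lo < y < hi -> continuous f y) -> lo < c < hi -> lo < x < hi ->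
  is_derive (fun y => RInt f c y) x (f x).
Proof.
  intros Hf Hc Hx. apply (is_derive_RInt f _ c); [|apply Hf; lra].
  apply (filter_imp (fun y => lo < y < hi)); [|apply locally_interval; lra].
  intros y Hy. exact (RInt_correct f c y (ex_RInt_inside f lo hi c y Hf Hc Hy)).
Qed.

Lemma RInt_derive_lower (f : R -> R) lo hi c x :
  (forall y, lo < y < hi -> continuous f y) -> lo < c < hi -> lo < x < hi ->
  is_derive (fun y => RInt f y c) x (- f x).
Proof.
  intros Hf Hc Hx. apply (is_derive_RInt' f _ x c); [|apply Hf; lra].
  apply (filter_imp (fun y => lo < y < hi)); [|apply locally_interval; lra].
  intros y Hy. exact (RInt_correct f y c (ex_RInt_inside f lo hi y c Hf Hy Hc)).
Qed.

Lemma RInt_derive_window (f : R -> R) y :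
  (forall t, 0 < t < 1 -> continuous f t) -> 0 < y < 1 ->
  is_derive (fun z => RInt f z (1 - z)) y (- f (1 - y) - f y).
Proof.
  intros Hf Hy.
  apply (is_derive_ext_loc (fun z => RInt f (1/2) (1 - z) + RInt f z (1/2))).
  - apply (filter_imp (fun z => 0 < z < 1)); [|apply locally_interval; lra].
    intros z Hz. rewrite Rplus_comm.
    apply (RInt_Chasles f); apply (ex_RInt_inside f 0 1); auto; lra.
  - replace (- f (1 - y) - f y) with ((-1) * f (1 - y) + - f y) by ring.
    apply (is_derive_plus (fun z => RInt f (1/2) (1 - z))).
    + apply (is_derive_comp (fun u => RInt f (1/2) u) (fun z => 1 - z)).
      * apply (RInt_derive_upper f 0 1); auto; lra.
      * auto_derive; [exact I | ring].
    + apply (RInt_derive_lower f 0 1); auto; lra.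
Qed.

Lemma continuous_sum (F : nat -> R -> R) x N :
  (forall r, (r <= N)%nat -> continuous (F r) x) ->
  continuous (fun y => sum_f_R0 (fun r => F r y) N) x.
Proof.
  induction N as [|N IH]; intros H; simpl; [apply H; lia|].
  apply (continuous_plus (fun y => sum_f_R0 (fun r => F r y) N) (F (S N))).
  - apply IH; intros; apply H; lia.
  - apply H; lia.
Qed.

Lemma is_derive_sum (F : nat -> R -> R) (dF : nat -> R) x N :
  (forall r, (r <= N)%nat -> is_derive (F r) x (dF r)) ->
  is_derive (fun y => sum_f_R0 (fun r => F r y) N) x (sum_f_R0 dF N).
Proof.
  intros H. rewrite <- sum_n_Reals.
  apply (is_derive_ext (fun y => sum_n (fun r => F r y) N)); [intros; apply sum_n_Reals|].
  exact (is_derive_sum_n (V := R_NormedModule) F N x dF H).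
Qed.

Lemma continuous_delta (f : R -> R) x : continuous f x -> forall e, 0 < e ->
  exists d, 0 < d /\ forall y, Rabs (y - x) < d -> Rabs (f y - f x) < e.
Proof.
  intros Hf e He. destruct (Hf _ (locally_ball (f x) (mkposreal e He))) as [d Hd].
  exists d. split; [apply cond_pos|]. intros y Hy. exact (Hd y Hy).
Qed.

Lemma ln_half : ln (1/2) = - ln 2.
Proof. replace (1/2) with (/2) by field. apply ln_Rinv; lra. Qed.

Lemma pow_pred_mult n L : INR n * L ^ pred n * L = INR n * L ^ n.
Proof. destruct n; simpl; ring. Qed.

(* mx x = max(x, 1-x): on W_n, a coordinate x forces all others to be >= 1 - x. *)
Definition mx (x : R) : R := Rmax x (1 - x).

Lemma mx_abs x : mx x = (1 + Rabs (2 * x - 1)) / 2.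
Proof.
  unfold mx, Rmax. destruct (Rle_dec x (1 - x)); [rewrite Rabs_left1 | rewrite Rabs_right]; lra.
Qed.

Lemma mx_continuous x : continuous mx x.
Proof.
  apply (continuous_ext (fun y => (1 + Rabs (2 * y - 1)) / 2)); [intros; symmetry; apply mx_abs|].
  apply (continuous_comp (fun y => Rabs (2 * y - 1)) (fun u => (1 + u) / 2)).
  - apply continuous_Rabs_comp. apply (ex_derive_continuous (fun y => 2 * y - 1)).
    auto_derive. exact I.
  - apply (ex_derive_continuous (fun u => (1 + u) / 2)). auto_derive. exact I.
Qed.

Definition phi (k : nat) (x : R) : R := (- ln (mx x)) ^ k / x.

Lemma phi_continuous k x : 0 < x -> continuous (phi k) x.
Proof.
  intros Hx. unfold phi, Rdiv.
  apply (continuous_mult (fun y => (- ln (mx y)) ^ k) (fun y => / y)).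
  - apply (continuous_comp mx (fun u => (- ln u) ^ k)); [apply mx_continuous|].
    apply (ex_derive_continuous (fun u => (- ln u) ^ k)). auto_derive.
    unfold mx. generalize (Rmax_l x (1 - x)). lra.
  - apply continuous_Rinv. lra.
Qed.

(* The closed form of I_n(a) = ∫_{W_n ∩ [a,1]^n} dx/(x_1...x_n). *)
Definition Wint (n : nat) (a : R) : R :=
  ln 2 ^ n + INR n * RInt (phi (pred n)) a (1/2).

Lemma Wint_derive n x : 0 < x -> is_derive (Wint n) x (- INR n * phi (pred n) x).
Proof.
  intros Hx. unfold Wint.
  replace (- INR n * phi (pred n) x) with (0 + INR n * - phi (pred n) x) by ring.
  apply (is_derive_plus (fun _ => ln 2 ^ n)).
  - apply (is_derive_const (K := R_AbsRing) (V := R_NormedModule)).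
  - apply (is_derive_scal (fun a => RInt (phi (pred n)) a (1/2))).
    apply (RInt_derive_lower _ 0 (x + 1)); try lra.
    intros; apply phi_continuous; lra.
Qed.

Lemma Wint_continuous n x : 0 < x -> continuous (Wint n) x.
Proof. intros Hx. apply (ex_derive_continuous (Wint n)). eexists. apply Wint_derive, Hx. Qed.

(* For a >= 1/2, W_n ∩ [a,1]^n = [a,1]^n, whose integral is (-ln a)^n. *)
Lemma Wint_ge_half n b : 1/2 <= b -> Wint n b = (- ln b) ^ n.
Proof.
  intros Hb. unfold Wint. destruct n as [|n]; [simpl; ring|]. simpl pred.
  assert (HS : 0 < INR (S n)) by (apply lt_0_INR; lia). set (s := INR (S n)) in *.
  rewrite (RInt_FTC _ (fun y => - (- ln y) ^ S n / s)).
  - rewrite ln_half, Ropp_involutive. field. lra.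
  - intros y Hy. rewrite Rmin_right, Rmax_left in Hy by lra.
    auto_derive; [lra|]. unfold phi, mx. rewrite Rmax_left by lra.
    fold_INR_S. fold s. field. lra.
  - intros y Hy. rewrite Rmin_right, Rmax_left in Hy by lra. apply phi_continuous. lra.
Qed.

(* Integrand of the recursion on the part of [a,1] where max(a,1-t) = 1-t. *)
Definition window (n : nat) (t : R) : R := Wint n (1 - t) / t.

Lemma window_continuous n t : 0 < t < 1 -> continuous (window n) t.
Proof.
  intros Ht. unfold window, Rdiv.
  apply (continuous_mult (fun u => Wint n (1 - u)) (fun u => / u)).
  - apply (continuous_comp (fun u => 1 - u) (Wint n)).
    + apply (ex_derive_continuous (fun u => 1 - u)). auto_derive. exact I.
    + apply Wint_continuous. lra.
  - apply continuous_Rinv. lra.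
Qed.

(* The recursion for a <= 1/2: both sides have derivative -(n+1) φ_n and agree at 1/2. *)
Lemma Wint_succ n a : 0 < a <= 1/2 ->
  Wint (S n) a = RInt (window n) a (1 - a) + Wint n a * - ln (1 - a).
Proof.
  intros Ha.
  apply (eq_of_same_derive _ (fun y => RInt (window n) y (1 - y) + Wint n y * - ln (1 - y))
           (fun y => - INR (S n) * phi n y) a (1/2)); [lra| |].
  - intros y Hy. split; [apply Wint_derive; lra|].
    eapply is_derive_eq.
    + apply (is_derive_plus (fun y => RInt (window n) y (1 - y))).
      * apply RInt_derive_window; [intros; apply window_continuous|]; lra.
      * apply (is_derive_mult (Wint n) (fun y => - ln (1 - y))).
        -- apply Wint_derive. lra.
        -- auto_derive; [lra | reflexivity].
        -- intros; apply Rmult_comm.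
    + assert (Hl : Wint n (1 - y) = (- ln (1 - y)) ^ n) by (apply Wint_ge_half; lra).
      rewrite S_INR. unfold window, phi, mx. rewrite Rmax_right by lra.
      replace (1 - (1 - y)) with y by ring. rewrite Hl.
      unfold plus, mult; simpl.
      replace (- INR n * ((- ln (1 - y)) ^ pred n / y) * - ln (1 - y))
        with (- (INR n * (- ln (1 - y)) ^ pred n * - ln (1 - y)) / y) by (field; lra).
      rewrite pow_pred_mult. field. lra.
  - replace (1 - 1/2) with (1/2) by field. rewrite !Wint_ge_half, RInt_point, ln_half by lra.
    simpl. unfold zero; simpl. ring.
Qed.

(* Value at t of the inner integral in the recursion, scaled by c. *)
Definition slice (n : nat) (a c t : R) : R :=
  if Rle_dec a t then c / t * Wint n (Rmax a (1 - t)) else 0.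

Lemma slice_integral n a c : 0 < a <= 1 ->
  ex_RInt (slice n a c) 0 1 /\ (RInt (slice n a c) 0 1 : R) = c * Wint (S n) a.
Proof.
  intros Ha.
  assert (Hlow : ex_RInt (slice n a c) 0 a /\ RInt (slice n a c) 0 a = RInt (fun _ => 0) 0 a).
  { apply RInt_ext_continuous; [lra | intros; apply continuous_const |].
    intros t Ht. unfold slice. destruct (Rle_dec a t); [lra | reflexivity]. }
  rewrite RInt_const_R, Rmult_0_l in Hlow. destruct Hlow as [Hl0 El0].
  (* where 1 - t <= a the slice is c Wint(n,a)/t *)
  assert (Hout : forall u v, a <= u <= v -> 1 - u <= a ->
            ex_RInt (slice n a c) u v /\
            (RInt (slice n a c) u v : R) = c * Wint n a * (ln v - ln u)).
  { intros u v Huv Hu. rewrite <- RInt_inv by lra. apply RInt_ext_continuous; [lra| |].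
    - intros t Ht. apply (ex_derive_continuous (fun t => c * Wint n a / t)). auto_derive. lra.
    - intros t Ht. unfold slice. destruct (Rle_dec a t); [|lra].
      rewrite Rmax_left by lra. field. lra. }
  destruct (Rlt_le_dec a (1/2)) as [Hsmall | Hbig].
  - assert (Hin : ex_RInt (slice n a c) a (1 - a) /\
                  RInt (slice n a c) a (1 - a) = RInt (fun t => c * window n t) a (1 - a)).
    { apply RInt_ext_continuous; [lra| |].
      - intros t Ht. apply (continuous_mult (fun _ => c) (window n)); [apply continuous_const|].
        apply window_continuous. lra.
      - intros t Ht. unfold slice, window. destruct (Rle_dec a t); [|lra].
        rewrite Rmax_right by lra. field. lra. }
    destruct Hin as [Hi Ei]. destruct (Hout (1 - a) 1 ltac:(lra) ltac:(lra)) as [Ho Eo].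
    assert (Ha1 : ex_RInt (slice n a c) a 1) by (apply (ex_RInt_Chasles _ a (1 - a)); auto).
    split; [apply (ex_RInt_Chasles _ 0 a); auto|].
    rewrite (RInt_split _ 0 a 1), (RInt_split _ a (1 - a) 1) by auto.
    rewrite El0, Ei, Eo, (RInt_scal (window n)).
    + rewrite Wint_succ, ln_1 by lra. unfold scal; simpl; unfold mult; simpl. ring.
    + apply (ex_RInt_continuous (window n)). intros t Ht. apply window_continuous.
      rewrite Rmin_left, Rmax_right in Ht by lra. lra.
  - destruct (Hout a 1 ltac:(lra) ltac:(lra)) as [Ho Eo].
    split; [apply (ex_RInt_Chasles _ 0 a); auto|].
    rewrite (RInt_split _ 0 a 1), El0, Eo, !Wint_ge_half, ln_1 by (auto || lra).
    simpl. ring.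
Qed.

(* The integrand c/(x_1...x_n) restricted to W_n ∩ [a,1]^n; trunc_integrand eps n is
   trunc n eps 1. *)
Definition trunc (n : nat) (a c : R) (xs : list R) : R :=
  if excluded_middle_informative (InW n xs /\ forall i, (i < n)%nat -> a <= nth i xs 0)
  then c / prodR xs else 0.

Lemma InW_cons n a t xs : 0 <= a <= t -> t <= 1 -> length xs = n ->
  (InW (S n) (t :: xs) /\ (forall i, (i < S n)%nat -> a <= nth i (t :: xs) 0)) <->
  (InW n xs /\ (forall i, (i < n)%nat -> Rmax a (1 - t) <= nth i xs 0)).
Proof.
  intros Ha Ht Hl. unfold InW. split.
  - intros [[_ [H01 Hsum]] Hlow]. split; [split; [exact Hl | split]|].
    + intros i Hi. apply (H01 (S i)). lia.
    + intros i j Hij Hj. apply (Hsum (S i) (S j)); lia.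
    + intros i Hi. apply Rmax_lub; [apply (Hlow (S i)); lia|].
      specialize (Hsum 0%nat (S i) ltac:(lia) ltac:(lia)). simpl in Hsum. lra.
  - intros [[_ [H01 Hsum]] Hlow]. split; [split; [simpl; auto | split]|].
    + intros [|i] Hi; simpl; [lra|]. apply H01; lia.
    + intros [|i] [|j] Hij Hj; simpl; try lia.
      * specialize (Hlow j ltac:(lia)). generalize (Rmax_r a (1 - t)). lra.
      * apply Hsum; lia.
    + intros [|i] Hi; simpl; [lra|].
      specialize (Hlow i ltac:(lia)). generalize (Rmax_l a (1 - t)). lra.
Qed.

Lemma trunc_cons n a c t xs : 0 < a <= t -> t <= 1 -> length xs = n ->
  trunc (S n) a c (t :: xs) = trunc n (Rmax a (1 - t)) (c / t) xs.
Proof.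
  intros Ha Ht Hl. unfold trunc.
  destruct (excluded_middle_informative (InW (S n) (t :: xs) /\ _)) as [h1|h1];
  destruct (excluded_middle_informative (InW n xs /\ _)) as [h2|h2].
  - simpl. unfold Rdiv. rewrite Rinv_mult. ring.
  - exfalso; apply h2; apply InW_cons; auto; lra.
  - exfalso; apply h1; apply InW_cons; auto; lra.
  - reflexivity.
Qed.

Lemma trunc_below n a c t xs : t < a -> trunc (S n) a c (t :: xs) = 0.
Proof.
  intros Ht. unfold trunc. destruct excluded_middle_informative as [[_ Hlow]|]; [|reflexivity].
  specialize (Hlow 0%nat (Nat.lt_0_succ n)). simpl in Hlow. lra.
Qed.

Lemma trunc_zero n a xs : trunc n a 0 xs = 0.
Proof. unfold trunc. destruct excluded_middle_informative; [unfold Rdiv; ring | reflexivity]. Qed.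

Lemma trunc_above_one n a c xs : 1 < a -> trunc (S n) a c xs = 0.
Proof.
  intros Ha. unfold trunc. destruct excluded_middle_informative as [[[_ [H01 _]] Hlow]|]; auto.
  specialize (H01 0%nat (Nat.lt_0_succ n)). specialize (Hlow 0%nat (Nat.lt_0_succ n)). lra.
Qed.

Lemma iter_int_ext n : forall F F' v, iter_int n F v ->
  (forall xs, length xs = n -> F xs = F' xs) -> iter_int n F' v.
Proof.
  induction n as [|n IHn]; simpl; intros F F' v H E.
  - rewrite H. apply E; reflexivity.
  - destruct H as [g [Hg Hv]]. exists g. split; auto.
    intros t Ht. apply (IHn _ _ _ (Hg t Ht)). intros xs Hl. apply E. simpl; rewrite Hl; reflexivity.
Qed.

Lemma iter_int_unique n : forall F v1 v2, iter_int n F v1 -> iter_int n F v2 -> v1 = v2.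
Proof.
  induction n as [|n IHn]; simpl; intros F v1 v2 H1 H2; [congruence|].
  destruct H1 as [g1 [H1 [p1 <-]]], H2 as [g2 [H2 [p2 <-]]].
  rewrite <- (RInt_Reals g1 0 1 p1), <- (RInt_Reals g2 0 1 p2).
  apply RInt_ext. rewrite Rmin_left, Rmax_right by lra. intros t Ht.
  apply (IHn (fun xs => F (t :: xs))); [apply H1 | apply H2]; lra.
Qed.

Lemma iter_int_of_RInt (F : list R -> R) n g :
  (forall t, 0 <= t <= 1 -> iter_int n (fun xs => F (t :: xs)) (g t)) ->
  ex_RInt g 0 1 -> iter_int (S n) F (RInt g 0 1).
Proof.
  intros Hg Hex. exists g. split; [exact Hg|].
  exists (ex_RInt_Reals_0 g 0 1 Hex). symmetry. apply RInt_Reals.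
Qed.

Lemma iter_int_zero n : iter_int n (fun _ => 0) 0.
Proof.
  induction n as [|n IHn]; [reflexivity|].
  pose proof (iter_int_of_RInt (fun _ => 0) n (fun _ => 0) (fun _ _ => IHn)
                (ex_RInt_const 0 1 0)) as H.
  rewrite RInt_const_R, Rmult_0_l in H. exact H.
Qed.

Lemma trunc_integral n : forall a c, 0 < a <= 1 -> iter_int n (trunc n a c) (c * Wint n a).
Proof.
  induction n as [|n IHn]; intros a c Ha.
  - unfold trunc, Wint. simpl. destruct excluded_middle_informative as [_|h].
    + simpl. field.
    + exfalso. apply h. split; [split; [reflexivity | split; intros; lia] | intros; lia].
  - destruct (slice_integral n a c Ha) as [Hex Hval]. rewrite <- Hval.
    apply iter_int_of_RInt; [|exact Hex].
    intros t Ht. unfold slice. destruct (Rle_dec a t) as [Hat|Hat].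
    + apply (iter_int_ext n (trunc n (Rmax a (1 - t)) (c / t))).
      * apply IHn. generalize (Rmax_l a (1 - t)); split; [lra | apply Rmax_lub; lra].
      * intros xs Hl. symmetry. apply trunc_cons; auto; lra.
    + replace 0 with (0 * Wint n a) by ring.
      apply (iter_int_ext n (trunc n a 0)); [apply IHn; auto|].
      intros xs _. rewrite trunc_zero, trunc_below; [reflexivity | lra].
Qed.

(* P r k is the antiderivative of y^r (-ln y)^k vanishing at 0 (integration by parts
   in k). *)
Fixpoint P (r k : nat) (y : R) : R :=
  match k with
  | O => y ^ S r / INR (S r)
  | S k' => y ^ S r * (- ln y) ^ S k' / INR (S r) + INR (S k') / INR (S r) * P r k' y
  end.

Lemma P_derive r k y : 0 < y -> is_derive (P r k) y (y ^ r * (- ln y) ^ k).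
Proof.
  intros Hy. assert (HR : 0 < INR (S r)) by (apply lt_0_INR; lia).
  set (s := INR (S r)) in *.
  induction k as [|k IH]; cbn [P]; fold s.
  - auto_derive; [exact I|]. fold_INR_S. fold s. simpl. field. lra.
  - set (t := INR (S k)).
    eapply is_derive_eq.
    + apply (is_derive_plus (fun y => y ^ S r * (- ln y) ^ S k / s)).
      * auto_derive; [lra | reflexivity].
      * apply (is_derive_scal (P r k)). exact IH.
    + fold_INR_S. fold s t. unfold plus; simpl. field. lra.
Qed.

(* ∫_0^1 y^r (-ln y)^k dy = k!/(r+1)^{k+1}: the ζ part. *)
Lemma P_at_one r k : P r k 1 = INR (fact k) * (1 / INR (S r) ^ S k).
Proof.
  assert (HR : 0 < INR (S r)) by (apply lt_0_INR; lia).
  induction k as [|k IH]; cbn [P].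
  - rewrite pow1, pow_1. change (fact 0) with 1%nat. rewrite INR_1. ring.
  - rewrite IH, ln_1, pow1, Ropp_0, pow_i by lia.
    rewrite fact_simpl, mult_INR, <- !tech_pow_Rmult. field.
    split; [apply pow_nonzero|]; lra.
Qed.

(* The value at 1/2 is Σ_p coef k p · li_term k p r, li_term k p being the r-th term
   of Li_{k+1-p}(1/2). *)
Definition coef (k p : nat) : R := ln 2 ^ p * INR (fact k) / INR (fact p).
Definition li_term (k p r : nat) : R := (1/2) ^ S r / INR (S r) ^ (S k - p).

Lemma P_at_half r k : P r k (1/2) = sum_f_R0 (fun p => coef k p * li_term k p r) k.
Proof.
  assert (HR : 0 < INR (S r)) by (apply lt_0_INR; lia).
  induction k as [|k IH]; cbn [P].
  - unfold coef, li_term, sum_f_R0. rewrite Nat.sub_0_r, !pow_1, pow_O.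
    change (fact 0) with 1%nat. rewrite INR_1. field. lra.
  - rewrite IH, ln_half, Ropp_involutive, tech5.
    assert (Hlast : coef (S k) (S k) * li_term (S k) (S k) r
                    = ln 2 ^ S k * ((1/2) ^ S r / INR (S r))).
    { unfold coef, li_term. rewrite Nat.sub_succ_l, Nat.sub_diag, pow_1 by lia.
      assert (0 < INR (fact (S k))) by (apply lt_0_INR, lt_O_fact). field. lra. }
    assert (Hrest : sum_f_R0 (fun p => coef k p * li_term k p r) k * (INR (S k) / INR (S r)) =
                    sum_f_R0 (fun p => coef (S k) p * li_term (S k) p r) k).
    { rewrite Rmult_comm, scal_sum. apply sum_eq. intros p Hp. unfold coef, li_term.
      replace (S (S k) - p)%nat with (S (S k - p)) by lia.
      rewrite fact_simpl, mult_INR, <- !tech_pow_Rmult.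
      assert (0 < INR (fact p)) by (apply lt_0_INR, lt_O_fact).
      field. split; [apply pow_nonzero|]; lra. }
    rewrite Hlast, <- Hrest. field. lra.
Qed.

Lemma infinite_sum_plus (a b : nat -> R) A B :
  infinite_sum a A -> infinite_sum b B -> infinite_sum (fun r => a r + b r) (A + B).
Proof.
  intros Ha Hb. apply is_series_Reals.
  apply (is_series_plus a b); apply is_series_Reals; assumption.
Qed.

Lemma infinite_sum_scal (a : nat -> R) A c :
  infinite_sum a A -> infinite_sum (fun r => c * a r) (c * A).
Proof. intros Ha. apply is_series_Reals. apply (is_series_scal c a). apply is_series_Reals, Ha. Qed.

Lemma infinite_sum_ext (a b : nat -> R) A :
  (forall r, a r = b r) -> infinite_sum a A -> infinite_sum b A.
Proof.
  intros E H. apply is_series_Reals. apply (is_series_ext a); auto. apply is_series_Reals, H.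
Qed.

Lemma infinite_sum_fsum (F : nat -> nat -> R) (Sv : nat -> R) k :
  (forall p, (p <= k)%nat -> infinite_sum (F p) (Sv p)) ->
  infinite_sum (fun r => sum_f_R0 (fun p => F p r) k) (sum_f_R0 Sv k).
Proof.
  induction k as [|k IH]; intros H; simpl; [apply H; lia|].
  apply infinite_sum_plus; [apply IH; intros; apply H|apply H]; lia.
Qed.

(* Mercator: the partial sums of Σ x^{r+1}/(r+1) approach -ln(1-x) within x^{N+1}/(1-x);
   the error is -∫_0^x y^{N+1}/(1-y) dy. *)
Lemma mercator_partial x N : 0 <= x < 1 ->
  Rabs (sum_f_R0 (fun r => x ^ S r / INR (S r)) N + ln (1 - x)) <= x ^ S N / (1 - x).
Proof.
  intros Hx.
  set (g := fun y => y ^ S N / (1 - y)).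
  assert (Hg : forall y, 0 <= y <= x -> continuous g y).
  { intros y Hy. apply (ex_derive_continuous g). unfold g. auto_derive. lra. }
  assert (E : sum_f_R0 (fun r => x ^ S r / INR (S r)) N + ln (1 - x) = - RInt g 0 x).
  { rewrite (RInt_FTC g (fun y => - (sum_f_R0 (fun r => y ^ S r / INR (S r)) N + ln (1 - y)))).
    - rewrite (sum_eq (fun r => 0 ^ S r / INR (S r)) (fun _ => 0)), sum_cte, Rminus_0_r, ln_1;
        [ring|].
      intros r _. rewrite pow_i by lia. unfold Rdiv. ring.
    - intros y Hy. rewrite Rmin_left, Rmax_right in Hy by lra.
      eapply is_derive_eq.
      + apply (is_derive_opp (fun y => sum_f_R0 (fun r => y ^ S r / INR (S r)) N + ln (1 - y))).
        apply (is_derive_plus (fun y => sum_f_R0 (fun r => y ^ S r / INR (S r)) N)).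
        * apply (is_derive_sum (fun r y => y ^ S r / INR (S r)) (fun r => y ^ r)).
          intros r _. auto_derive; [exact I|]. fold_INR_S. field.
          apply not_0_INR. lia.
        * auto_derive; [lra | reflexivity].
      + unfold opp, plus; simpl. unfold g. rewrite tech3 by lra. field. lra.
    - intros y Hy. rewrite Rmin_left, Rmax_right in Hy by lra. apply Hg. lra. }
  assert (Hex : ex_RInt g 0 x).
  { apply (ex_RInt_continuous g). rewrite Rmin_left, Rmax_right by lra. exact Hg. }
  assert (Hpos : 0 <= RInt g 0 x).
  { apply RInt_ge_0; [lra | exact Hex|]. intros y Hy. unfold g.
    apply Rdiv_le_0_compat; [apply pow_le|]; lra. }
  assert (Hub : RInt g 0 x <= RInt (fun _ => x ^ S N / (1 - x)) 0 x).
  { apply RInt_le; [lra | exact Hex | apply ex_RInt_const |]. intros y Hy. unfold g.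
    apply Rmult_le_compat; [apply pow_le; lra | apply Rlt_le, Rinv_0_lt_compat; lra | |].
    - apply pow_incr; lra.
    - apply Rinv_le_contravar; lra. }
  rewrite RInt_const_R in Hub.
  rewrite E, Rabs_Ropp, Rabs_right by lra.
  assert (0 <= x ^ S N / (1 - x)) by (apply Rdiv_le_0_compat; [apply pow_le|]; lra).
  nra.
Qed.

Lemma mercator x : 0 <= x < 1 -> infinite_sum (fun r => x ^ S r / INR (S r)) (- ln (1 - x)).
Proof.
  intros Hx e He.
  destruct (pow_lt_1_zero x ltac:(rewrite Rabs_right; lra) (e * (1 - x))) as [N HN]; [nra|].
  exists N. intros n Hn. unfold Rdist.
  replace (sum_f_R0 (fun r => x ^ S r / INR (S r)) n - - ln (1 - x))
    with (sum_f_R0 (fun r => x ^ S r / INR (S r)) n + ln (1 - x)) by ring.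
  eapply Rle_lt_trans; [apply mercator_partial; exact Hx|].
  specialize (HN (S n) ltac:(lia)). rewrite Rabs_right in HN by (apply Rle_ge, pow_le; lra).
  apply (Rmult_lt_reg_r (1 - x)); [lra|]. unfold Rdiv. rewrite Rmult_assoc, Rinv_l by lra. lra.
Qed.

(* For k >= 1, on ]0,1/2] the geometric expansion of 1/x around 1 splits φ_k into a
   head, integrated exactly by the P r k, and a remainder of size O(1/N). *)
Lemma phi_small k x : 0 < x <= 1/2 -> phi k x = (- ln (1 - x)) ^ k / x.
Proof. intros Hx. unfold phi, mx. rewrite Rmax_right by lra. reflexivity. Qed.

Definition SP (k N : nat) (y : R) : R := sum_f_R0 (fun r => P r k y) N.

Definition head_part (k N : nat) (x : R) : R :=
  sum_f_R0 (fun r => (1 - x) ^ r * (- ln (1 - x)) ^ k) N.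
Definition remainder_part (k N : nat) (x : R) : R :=
  (1 - x) ^ S N * (- ln (1 - x)) ^ k / x.

Lemma phi_split k N x : 0 < x <= 1/2 -> phi k x = head_part k N x + remainder_part k N x.
Proof.
  intros Hx. rewrite phi_small by lra. unfold head_part, remainder_part.
  rewrite <- (scal_sum (fun r => (1 - x) ^ r) N ((- ln (1 - x)) ^ k)), tech3 by lra.
  field. lra.
Qed.

Lemma head_part_integral k N eps : 0 < eps <= 1/2 ->
  ex_RInt (head_part k N) eps (1/2) /\
  (RInt (head_part k N) eps (1/2) : R) = SP k N (1 - eps) - SP k N (1/2).
Proof.
  intros Heps.
  assert (Hc : forall x, eps <= x <= 1/2 -> continuous (head_part k N) x).
  { intros x Hx. apply (continuous_sum (fun r y => (1 - y) ^ r * (- ln (1 - y)) ^ k)).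
    intros r _. apply (ex_derive_continuous (fun y => (1 - y) ^ r * (- ln (1 - y)) ^ k)).
    auto_derive. lra. }
  split.
  - apply (ex_RInt_continuous (head_part k N)). rewrite Rmin_left, Rmax_right by lra. exact Hc.
  - rewrite (RInt_FTC _ (fun x => - SP k N (1 - x))).
    + replace (1 - 1/2) with (1/2) by field. ring.
    + intros x Hx. rewrite Rmin_left, Rmax_right in Hx by lra. unfold SP.
      eapply is_derive_eq.
      * apply (is_derive_opp (fun y => sum_f_R0 (fun r => P r k (1 - y)) N)).
        apply (is_derive_sum (fun r y => P r k (1 - y))
                 (fun r => (-1) * ((1 - x) ^ r * (- ln (1 - x)) ^ k))).
        intros r _. apply (is_derive_comp (P r k) (fun y => 1 - y)).
        -- apply P_derive. lra.
        -- auto_derive; [exact I | ring].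
      * unfold head_part, opp; simpl.
        rewrite (sum_eq (fun r => (-1) * ((1 - x) ^ r * (- ln (1 - x)) ^ k))
                   (fun r => (1 - x) ^ r * (- ln (1 - x)) ^ k * (-1))) by (intros; ring).
        rewrite <- scal_sum. ring.
    + intros x Hx. rewrite Rmin_left, Rmax_right in Hx by lra. exact (Hc x Hx).
Qed.

Lemma neg_ln_bound x : 0 < x <= 1/2 -> 0 <= - ln (1 - x) <= 2 * x.
Proof.
  intros Hx. split.
  - assert (ln (1 - x) <= ln 1) by (apply ln_le; lra). rewrite ln_1 in *. lra.
  - rewrite <- ln_Rinv by lra. rewrite <- (ln_exp (2 * x)).
    apply ln_le; [apply Rinv_0_lt_compat; lra|].
    apply Rle_trans with (1 + x / (1 - x)); [right; field; lra|].
    apply Rle_trans with (1 + 2 * x); [|apply exp_ineq1_le].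
    apply Rplus_le_compat_l. apply (Rmult_le_reg_r (1 - x)); [lra|].
    unfold Rdiv. rewrite Rmult_assoc, Rinv_l by lra. nra.
Qed.

Lemma log_ratio_bound k x : (1 <= k)%nat -> 0 < x <= 1/2 -> (- ln (1 - x)) ^ k / x <= 2 ^ k.
Proof.
  intros Hk Hx. destruct k as [|k]; [lia|].
  destruct (neg_ln_bound x Hx) as [L0 L1].
  apply Rle_trans with ((2 * x) ^ S k / x).
  - unfold Rdiv. apply Rmult_le_compat_r; [apply Rlt_le, Rinv_0_lt_compat; lra|].
    apply pow_incr; lra.
  - rewrite Rpow_mult_distr. simpl (x ^ S k).
    replace (2 ^ S k * (x * x ^ k) / x) with (2 ^ S k * x ^ k) by (field; lra).
    rewrite <- (Rmult_1_r (2 ^ S k)) at 2. apply Rmult_le_compat_l; [apply pow_le; lra|].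
    rewrite <- (pow1 k). apply pow_incr; lra.
Qed.

(* The remainder integrates to at most ∫ 2^k (1-x)^{N+1} <= 2^k/(N+2). *)
Lemma remainder_part_bound k N eps : (1 <= k)%nat -> 0 < eps <= 1/2 ->
  ex_RInt (remainder_part k N) eps (1/2) /\
  0 <= RInt (remainder_part k N) eps (1/2) <= 2 ^ k / INR (S (S N)).
Proof.
  intros Hk Heps.
  assert (Hex : ex_RInt (remainder_part k N) eps (1/2)).
  { apply (ex_RInt_continuous (remainder_part k N)). rewrite Rmin_left, Rmax_right by lra.
    intros x Hx. apply (ex_derive_continuous (remainder_part k N)).
    unfold remainder_part. auto_derive. lra. }
  split; [exact Hex | split].
  - apply RInt_ge_0; [lra | exact Hex |]. intros x Hx. unfold remainder_part.
    destruct (neg_ln_bound x ltac:(lra)).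
    apply Rdiv_le_0_compat; [apply Rmult_le_pos; apply pow_le|]; lra.
  - set (M := INR (S (S N))). assert (HM : 0 < M) by (apply lt_0_INR; lia).
    apply Rle_trans with (RInt (fun x => 2 ^ k * (1 - x) ^ S N) eps (1/2)).
    + apply RInt_le; [lra | exact Hex | |].
      * apply (ex_RInt_continuous (fun x => 2 ^ k * (1 - x) ^ S N)). intros x _.
        apply (ex_derive_continuous (fun x => 2 ^ k * (1 - x) ^ S N)). auto_derive. exact I.
      * intros x Hx. unfold remainder_part, Rdiv. rewrite Rmult_assoc, (Rmult_comm (2 ^ k)).
        apply Rmult_le_compat_l; [apply pow_le; lra|]. apply log_ratio_bound; [exact Hk | lra].
    + rewrite (RInt_FTC _ (fun x => - (2 ^ k * (1 - x) ^ S (S N) / M))).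
      * assert (0 <= (1 - 1/2) ^ S (S N)) by (apply pow_le; lra).
        assert ((1 - eps) ^ S (S N) <= 1 ^ S (S N)) by (apply pow_incr; lra). rewrite pow1 in *.
        assert (0 < 2 ^ k) by (apply pow_lt; lra).
        unfold Rdiv. assert (0 < / M) by (apply Rinv_0_lt_compat; lra).
        assert (0 < 2 ^ k * / M) by (apply Rmult_lt_0_compat; lra).
        nra.
      * intros x _. auto_derive; [exact I|]. fold_INR_S. rewrite <- S_INR. fold M.
        simpl pow. change (1 + - x) with (1 - x). field. lra.
      * intros x _. apply (ex_derive_continuous (fun x => 2 ^ k * (1 - x) ^ S N)).
        auto_derive. exact I.
Qed.

Lemma phi_integral_split k N eps : (1 <= k)%nat -> 0 < eps <= 1/2 ->
  exists Rm, 0 <= Rm <= 2 ^ k / INR (S (S N)) /\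
  (RInt (phi k) eps (1/2) : R) = SP k N (1 - eps) - SP k N (1/2) + Rm.
Proof.
  intros Hk Heps.
  destruct (head_part_integral k N eps Heps) as [Hh Eh].
  destruct (remainder_part_bound k N eps Hk Heps) as [Ht Bt].
  exists (RInt (remainder_part k N) eps (1/2)). split; [exact Bt|].
  rewrite <- Eh, (RInt_ext (phi k) (fun x => head_part k N x + remainder_part k N x)).
  - exact (RInt_plus (head_part k N) (remainder_part k N) eps (1/2) Hh Ht).
  - rewrite Rmin_left, Rmax_right by lra. intros x Hx. apply phi_split. lra.
Qed.

Lemma SP_continuous k N y : 0 < y -> continuous (SP k N) y.
Proof.
  intros Hy. apply (continuous_sum (fun r y => P r k y)). intros r _.
  apply (ex_derive_continuous (P r k)). eexists. apply P_derive, Hy.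
Qed.

(* ∫_ε^{1/2} φ_k -> Σ_r (P r k 1 - P r k (1/2)): choose N for the series and the
   remainder, then ε by continuity of SP k N at 1. *)
Lemma phi_integral_limit k J : (1 <= k)%nat ->
  infinite_sum (fun r => P r k 1 - P r k (1/2)) J ->
  forall e, 0 < e -> exists d, 0 < d <= 1/2 /\
    forall eps, 0 < eps < d -> Rabs (RInt (phi k) eps (1/2) - J) < e.
Proof.
  intros Hk HJ e He.
  destruct (HJ (e/3)) as [N1 H1]; [lra|].
  destruct (INR_unbounded (3 * 2 ^ k / e)) as [N2 H2].
  set (N := max N1 N2).
  destruct (continuous_delta (SP k N) 1 (SP_continuous k N 1 ltac:(lra)) (e/3))
    as [d0 [Hd0 Hc]]; [lra|].
  exists (Rmin d0 (1/2)). split; [split; [apply Rmin_glb_lt|apply Rmin_r]; lra|].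
  intros eps Heps. generalize (Rmin_l d0 (1/2)) (Rmin_r d0 (1/2)); intros.
  destruct (phi_integral_split k N eps Hk ltac:(lra)) as [Rm [HR ->]].
  specialize (H1 N ltac:(unfold N; lia)). unfold Rdist in H1. rewrite minus_sum in H1.
  specialize (Hc (1 - eps)). rewrite Rabs_left in Hc by lra. specialize (Hc ltac:(lra)).
  assert (HB : 2 ^ k / INR (S (S N)) < e / 3).
  { assert (INR N2 <= INR (S (S N))) by (apply le_INR; unfold N; lia).
    apply Rlt_div_l; [apply lt_0_INR; lia|].
    replace (2 ^ k) with (e / 3 * (3 * 2 ^ k / e)) by (field; lra).
    apply Rmult_lt_compat_l; lra. }
  unfold SP in *. apply Rabs_def2 in H1. apply Rabs_def2 in Hc. apply Rabs_def1; lra.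
Qed.

(* Li_{k+1-p}(1/2) for p < k, and Li_1(1/2) = ln 2 for p = k. *)
Definition li_value (li : nat -> R) (k p : nat) : R :=
  if (p <? k)%nat then li (S k - p)%nat else ln 2.

Definition gap (li : nat -> R) (z : R) (k : nat) : R :=
  INR (fact k) * z - sum_f_R0 (fun p => coef k p * li_value li k p) k.

Lemma gap_series k z li : is_zeta (S k) z ->
  (forall s, (2 <= s)%nat -> is_Li_half s (li s)) ->
  infinite_sum (fun r => P r k 1 - P r k (1/2)) (gap li z k).
Proof.
  intros hz hli. unfold gap, Rminus.
  apply (infinite_sum_ext (fun r => INR (fact k) * (1 / INR (S r) ^ S k)
                                   + - sum_f_R0 (fun p => coef k p * li_term k p r) k)).
  { intros r. rewrite P_at_one, P_at_half. ring. }
  apply infinite_sum_plus; [apply infinite_sum_scal, hz|].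
  apply (infinite_sum_ext (fun r => (-1) * sum_f_R0 (fun p => coef k p * li_term k p r) k));
    [intros; ring|].
  replace (- sum_f_R0 (fun p => coef k p * li_value li k p) k)
    with ((-1) * sum_f_R0 (fun p => coef k p * li_value li k p) k) by ring.
  apply infinite_sum_scal, (infinite_sum_fsum (fun p r => coef k p * li_term k p r)).
  intros p Hp. apply infinite_sum_scal. unfold li_value, li_term.
  destruct (Nat.ltb_spec p k) as [Hlt|Hge]; [apply hli; lia|].
  replace (S k - p)%nat with 1%nat by lia.
  apply (infinite_sum_ext (fun r => (1/2) ^ S r / INR (S r)));
    [intros; rewrite pow_1; reflexivity|].
  replace (ln 2) with (- ln (1 - 1/2))
    by (replace (1 - 1/2) with (1/2) by field; rewrite ln_half; ring).
  apply mercator. lra.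
Qed.

Lemma closed_form_identity li z k : (1 <= k)%nat ->
  INR (fact (S k)) * z - INR (S k - 1) * ln 2 ^ S k
    - INR (fact (S k)) * sum_f_R0 (fun p => ln 2 ^ p / INR (fact p) * li (S k - p)%nat) (S k - 2)
  = ln 2 ^ S k + INR (S k) * gap li z k.
Proof.
  intros Hk. destruct k as [|k]; [lia|].
  replace (S (S k) - 1)%nat with (S k) by lia. replace (S (S k) - 2)%nat with k by lia.
  unfold gap. rewrite tech5.
  assert (Hlast : coef (S k) (S k) * li_value li (S k) (S k) = ln 2 ^ S (S k)).
  { unfold coef, li_value. rewrite Nat.ltb_irrefl, <- (tech_pow_Rmult (ln 2) (S k)).
    assert (0 < INR (fact (S k))) by (apply lt_0_INR, lt_O_fact). field. lra. }
  assert (Hrest : INR (S (S k)) * sum_f_R0 (fun p => coef (S k) p * li_value li (S k) p) k =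
                  INR (fact (S (S k))) *
                  sum_f_R0 (fun p => ln 2 ^ p / INR (fact p) * li (S (S k) - p)%nat) k).
  { rewrite !scal_sum. apply sum_eq. intros p Hp. unfold coef, li_value.
    destruct (Nat.ltb_spec p (S k)); [|lia].
    rewrite (fact_simpl (S k)), mult_INR.
    assert (0 < INR (fact p)) by (apply lt_0_INR, lt_O_fact). field. lra. }
  rewrite Hlast, Rmult_minus_distr_l, Rmult_plus_distr_l, Hrest.
  rewrite (fact_simpl (S k)), mult_INR, (S_INR (S k)). ring.
Qed.

Lemma Wint_limit k J : (1 <= k)%nat ->
  infinite_sum (fun r => P r k 1 - P r k (1/2)) J ->
  forall e, 0 < e -> exists d, 0 < d <= 1/2 /\
    forall eps, 0 < eps < d -> Rabs (Wint (S k) eps - (ln 2 ^ S k + INR (S k) * J)) < e.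
Proof.
  intros Hk HJ e He.
  assert (HS : 0 < INR (S k)) by (apply lt_0_INR; lia).
  destruct (phi_integral_limit k J Hk HJ (e / INR (S k))) as [d [Hd Hdd]];
    [apply Rdiv_lt_0_compat; lra|].
  exists d. split; [exact Hd|]. intros eps Heps. unfold Wint. simpl pred.
  replace (ln 2 ^ S k + INR (S k) * RInt (phi k) eps (1/2) - (ln 2 ^ S k + INR (S k) * J))
    with (INR (S k) * (RInt (phi k) eps (1/2) - J)) by ring.
  rewrite Rabs_mult, Rabs_right by lra.
  specialize (Hdd eps Heps). apply (Rmult_lt_compat_l (INR (S k))) in Hdd; [|exact HS].
  replace (INR (S k) * (e / INR (S k))) with e in Hdd by (field; lra). exact Hdd.
Qed.

Theorem theorem7 (m : nat) (hm : (2 <= m)%nat)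
  (z : R) (hz : is_zeta m z)
  (li : nat -> R) (hli : forall s, (2 <= s)%nat -> is_Li_half s (li s)) :
  Lm_is m
    (INR (fact m) * z - INR (m - 1) * (ln 2) ^ m
     - INR (fact m) *
       sum_f_R0 (fun p => (ln 2) ^ p / INR (fact p) * li (m - p)%nat) (m - 2)).
Proof.
  destruct m as [|k]; [lia|]. assert (Hk : (1 <= k)%nat) by lia.
  rewrite (closed_form_identity li z k Hk).
  split.
  - (* the truncated integrals exist: they equal Wint (k+1) eps, or 0 when eps > 1 *)
    intros eps Heps. change (trunc_integrand eps (S k)) with (trunc (S k) eps 1).
    destruct (Rle_dec eps 1) as [Hle|Hgt].
    + exists (1 * Wint (S k) eps). apply trunc_integral. lra.
    + exists 0. apply (iter_int_ext _ (fun _ => 0)); [apply iter_int_zero|].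
      intros xs _. symmetry. apply trunc_above_one. lra.
  -
    intros e He.
    destruct (Wint_limit k _ Hk (gap_series k z li hz hli) e He) as [d [Hd Hlim]].
    exists d. split; [lra|]. intros eps v Heps Hv.
    change (trunc_integrand eps (S k)) with (trunc (S k) eps 1) in Hv.
    rewrite (iter_int_unique _ _ _ _ Hv (trunc_integral (S k) eps 1 ltac:(lra))), Rmult_1_l.
    apply Hlim. exact Heps.
Qed.
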